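(* Let $G$ be a locally compact group, $G_e$ the connected component of its identity and $q_e:G\to G/G_e$ the quotient map. Let $(\eta_{td},G^{td})$ be the totally disconnected compactification of $G$ and $(\tilde{\eta}_{td},(G/G_e)^{td})$ the totally disconnected compactification of $G/G_e$. Then there is an isomorphism of topological groups $\theta:G^{td}\to(G/G_e)^{td}$ with $\theta\circ\eta_{td}=\tilde{\eta}_{td}\circ q_e$; that is, the compactifications $(\eta_{td},G^{td})$ and $(\tilde{\eta}_{td}\circ q_e,(G/G_e)^{td})$ of $G$ coincide. In particular $G^{td}\cong(G/G_e)^{td}$.
   Context: For a locally compact group $G$, let $(\eta_{ap},G^{ap})$ be its maximal almost periodic (Bohr) compactification: $G^{ap}$ is a compact group and $\eta_{ap}:G\to G^{ap}$ a continuous homomorphism with dense range, universal among such group compactifications. Let $(G^{ap})_e$ be the connected component of the identity in $G^{ap}$ and $q^{ap}_e:G^{ap}\to G^{ap}/(G^{ap})_e$ the quotient map. The totally disconnected compactification of $G$ is $(\eta_{td},G^{td})$ where $G^{td}=G^{ap}/(G^{ap})_e$ and $\eta_{td}=q^{ap}_e\circ\eta_{ap}$. *)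

From HB Require Import structures.
From mathcomp Require Import all_boot monoid.
From mathcomp Require Import boolp classical_sets functions.
From mathcomp Require Import topology.

Set Implicit Arguments.
Unset Strict Implicit.
Unset Printing Implicit Defensive.

Local Open Scope classical_set_scope.
Local Open Scope group_scope.

HB.mixin Record isTopologicalGroup G of Group G & Topological G := {
  mul_continuous : continuous (fun p : G * G => p.1 * p.2);
  inv_continuous : continuous (fun x : G => x^-1)
}.

#[short(type="topGroupType")]
HB.structure Definition TopologicalGroup :=
  {G of isTopologicalGroup G & Group G & Topological G}.

Definition cont_hom (G H : topGroupType) (f : G -> H) : Prop :=
  (forall x y : G, f (x * y) = f x * f y) /\ continuous f.

Definition compact_group (K : topGroupType) : Prop :=
  compact [set: K] /\ hausdorff_space K.

Definition locally_compact_group (G : topGroupType) : Prop :=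
  locally_compact [set: G] /\ hausdorff_space G.

Definition group_compactification (G K : topGroupType) (eta : G -> K) : Prop :=
  compact_group K /\ cont_hom eta /\ dense (range eta).

Definition ap_compactification (G K : topGroupType) (eta : G -> K) : Prop :=
  group_compactification eta /\
  forall (H : topGroupType) (f : G -> H), group_compactification f ->
    exists g : K -> H, cont_hom g /\ g \o eta = f.

Definition identity_component (G : topGroupType) : set G :=
  connected_component [set: G] 1.

(* (q, Q) realizes the quotient topological group G / G_e with its quotient
   map: q is a continuous, open, surjective homomorphism whose kernel is the
   connected component of the identity of G. *)
Definition quotient_by_identity_component (G Q : topGroupType) (q : G -> Q)
  : Prop :=
  cont_hom q /\ (forall y : Q, exists x : G, q x = y) /\
  (forall U : set G, open U -> open (q @` U)) /\
  q @^-1` [set 1] = @identity_component G.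

Definition topgroup_iso (G H : topGroupType) (theta : G -> H) : Prop :=
  cont_hom theta /\
  exists theta' : H -> G, continuous theta' /\ cancel theta theta' /\
    cancel theta' theta.

From HB Require Import structures.
From mathcomp Require Import all_boot monoid.
From mathcomp Require Import boolp classical_sets functions.
From mathcomp Require Import topology.

(* The quotient of a topological group by its identity component is a
   Hausdorff group with trivial identity component (the preimage of a
   connected set is connected, the fibres being cosets of the connected
   identity component), and continuous homomorphisms map identity components
   into identity components.  Hence G^td is universal among the group
   compactifications of G whose target has trivial identity component.
   Now G -> G/G_e -> (G/G_e)^td is such a compactification, and since
   G -> G^td kills G_e it factors through G/G_e, making G^td a compactification
   of G/G_e with trivial identity component.  The two universal properties
   give continuous homomorphisms both ways which are mutually inverse on dense
   subgroups, hence everywhere. *)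

Set Implicit Arguments.
Unset Strict Implicit.
Unset Printing Implicit Defensive.

Local Open Scope classical_set_scope.
Local Open Scope group_scope.

Definition trivial_identity_component (K : topGroupType) : Prop :=
  forall y : K, @identity_component K y -> y = 1.

Lemma cont_hom1 (X Y : topGroupType) (f : X -> Y) : cont_hom f -> f 1 = 1.
Proof.
case=> fM _; have := fM 1 1; rewrite mulg1 => f11.
by apply: (@mulgI _ (f 1)); rewrite -f11 mulg1.
Qed.

Lemma cont_homV (X Y : topGroupType) (f : X -> Y) (x : X) :
  cont_hom f -> f x^-1 = (f x)^-1.
Proof.
by move=> hf; apply/esym/mulg1_eq; rewrite -hf.1 mulgV (cont_hom1 hf).
Qed.

Lemma cont_hom_comp (X Y Z : topGroupType) (f : X -> Y) (g : Y -> Z) :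
  cont_hom f -> cont_hom g -> cont_hom (g \o f).
Proof.
move=> [fM fc] [gM gc]; split=> [x y /=|x]; first by rewrite fM gM.
exact: continuous_comp (fc x) (gc (f x)).
Qed.

Lemma left_translation_continuous (X : topGroupType) (x : X) :
  continuous (fun k : X => x * k).
Proof.
move=> k W /= Wxk.
have [[P Q] [/= Px Qk] PQW] := @mul_continuous X (x, k) W Wxk.
apply: filterS Qk => k' Qk'; apply: (PQW (x, k')).
by split=> //=; exact: nbhs_singleton.
Qed.

Lemma coset_component_connected (X : topGroupType) (x : X) :
  connected ((fun k => x * k) @` @identity_component X).
Proof.
apply: connected_continuous_connected; first exact: component_connected.
exact/continuous_subspaceT/left_translation_continuous.
Qed.

Lemma cont_hom_identity_component (X Y : topGroupType) (f : X -> Y) (x : X) :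
  cont_hom f -> @identity_component X x -> @identity_component Y (f x).
Proof.
move=> hf Xx; apply: (@connected_component_max _ _ (f @` @identity_component X)).
- by exists 1; [exact: connected_component_refl | exact: cont_hom1].
- by [].
- apply: connected_continuous_connected; first exact: component_connected.
  exact/continuous_subspaceT/hf.2.
- by exists x.
Qed.

Lemma cont_hom_trivial_component (X Y : topGroupType) (f : X -> Y) (x : X) :
  cont_hom f -> trivial_identity_component Y -> @identity_component X x ->
  f x = 1.
Proof. by move=> hf tdY /(cont_hom_identity_component hf); exact: tdY. Qed.

Lemma closed1_hausdorff (K : topGroupType) :
  closed [set 1 : K] -> hausdorff_space K.
Proof.
move=> cl1 p r clpr; apply: contrapT => npr.
have nW : nbhs (p * r^-1) (~` [set 1]).
  by apply: open_nbhs_nbhs; split; [rewrite openC | move=> /= /divg1_eq].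
have [[P Q] [/= Pp Qr] PQW] := @mul_continuous K (p, r^-1) _ nW.
have [z [Pz Qz]] := clpr P _ Pp (@inv_continuous K r Q Qr).
by apply: (PQW (z, z^-1) (conj Pz Qz)); rewrite /= mulgV.
Qed.

Lemma continuous_dense_eq (X Z : topologicalType) (f g : X -> Z) (D : set X) :
  continuous f -> continuous g -> hausdorff_space Z -> dense D ->
  {in D, f =1 g} -> f = g.
Proof.
move=> fc gc hZ dD fg; apply: funext => x; apply: hZ => A B nA nB.
have : nbhs x (f @^-1` A `&` g @^-1` B) by apply: filterI; [exact: fc|exact: gc].
rewrite nbhsE => -[O [oO Ox] OAB].
have [d [Od Dd]] := dD O (ex_intro _ x Ox) oO.
have [Afd Bgd] := OAB d Od.
by exists (f d); split=> //; rewrite fg ?inE.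
Qed.

Lemma dense_range_comp (X Y Z : topologicalType) (g : X -> Y) (f : Y -> Z) :
  dense (range g) -> continuous f -> (forall z, exists y, f y = z) ->
  dense (range (f \o g)).
Proof.
move=> dg fc fsurj O [z Oz] oO.
have oP : open (f @^-1` O) by move/continuousP: fc; exact.
have [y fyz] := fsurj z.
have Py : (f @^-1` O) y by rewrite /preimage /= fyz.
have [w [Pw [x _ gxw]]] := dg _ (ex_intro _ y Py) oP.
by exists (f w); split=> //; exists x => //=; rewrite gxw.
Qed.

Lemma range_comp_surj (X Y Z : Type) (g : X -> Y) (f : Y -> Z) :
  (forall y, exists x, g x = y) -> range (f \o g) = range f.
Proof.
move=> gsurj; apply/seteqP; split=> [_ [x _ <-]|_ [y _ <-]].
  by exists (g x).
by have [x <-] := gsurj y; exists x.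
Qed.

Section QuotientByIdentityComponent.
Variables (X Y : topGroupType) (q : X -> Y).
Hypothesis Hq : quotient_by_identity_component q.

Let q_hom : cont_hom q := Hq.1.
Let q_surj : forall y, exists x, q x = y := Hq.2.1.
Let q_open : forall U : set X, open U -> open (q @` U) := Hq.2.2.1.

Lemma quot_kerE (x : X) : q x = 1 <-> @identity_component X x.
Proof. by rewrite -Hq.2.2.2. Qed.

Lemma quot_eq (a b : X) : q a = q b -> @identity_component X (a^-1 * b).
Proof.
by move=> qab; apply/quot_kerE; rewrite q_hom.1 (cont_homV _ q_hom) qab mulVg.
Qed.

Lemma quot_section : exists s : Y -> X, cancel s q.
Proof. by have [s qs] := choice q_surj; exists s. Qed.

Lemma quot_factor (Z : topGroupType) (f : X -> Z) : cont_hom f ->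
  (forall x, @identity_component X x -> f x = 1) ->
  exists h : Y -> Z, cont_hom h /\ h \o q = f.
Proof.
move=> hf fK; have [s qs] := quot_section.
have f_eq a b : q a = q b -> f a = f b.
  move=> /quot_eq /fK; rewrite hf.1 (cont_homV _ hf) => fab.
  by apply/esym/(mulgI (f a)^-1); rewrite fab mulVg.
exists (f \o s); split; last by apply: funext => x /=; apply: f_eq; rewrite qs.
split=> [y1 y2 /=|]; first by rewrite -hf.1; apply: f_eq; rewrite q_hom.1 !qs.
apply/continuousP => V oV.
have -> : (f \o s) @^-1` V = q @` (f @^-1` V).
  apply/seteqP; split=> [y /= Vy|_ [x /= Vx <-]]; first by exists (s y).
  by rewrite /preimage /= (f_eq _ x) ?qs.
by apply: q_open; move/continuousP: hf.2; exact.
Qed.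

Lemma quot_closed1 : closed [set 1 : Y].
Proof.
rewrite -openC.
have -> : ~` [set 1] = q @` (~` @identity_component X).
  apply/seteqP; split=> [y /= y1|_ [x /= Kx <-] /= /quot_kerE //].
  have [s qs] := quot_section; exists (s y); last exact: qs.
  by move=> /quot_kerE; rewrite qs.
by apply/q_open/closed_openC/component_closed/closedT.
Qed.

Lemma quot_hausdorff : hausdorff_space Y.
Proof. exact/closed1_hausdorff/quot_closed1. Qed.

Lemma quot_compact : compact [set: X] -> compact [set: Y].
Proof.
move=> cX; have -> : [set: Y] = q @` [set: X].
  by apply/seteqP; split=> // y _; have [x <-] := q_surj y; exists x.
exact/continuous_compact/cX/continuous_subspaceT/q_hom.2.
Qed.

Lemma separated_saturated (C : set Y) (A B : set X) :
  q @^-1` C = A `|` B -> separated A B ->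
  forall x z, A x -> q z = q x -> A z.
Proof.
move=> CAB sepAB x z Ax qzx.
set L := (fun k => x * k) @` @identity_component X.
have LAB : L `<=` A `|` B.
  have Cqx : C (q x) by have : (q @^-1` C) x by rewrite CAB; left.
  rewrite -CAB => _ [k /quot_kerE qk <-].
  by rewrite /preimage /= q_hom.1 qk mulg1.
have Lx : L x by exists 1; [exact: connected_component_refl | exact: mulg1].
have Lz : L z by exists (x^-1 * z); [apply: quot_eq; rewrite qzx | exact: mulVKg].
case: (connected_subset sepAB LAB (@coset_component_connected _ x)) => LS.
  exact: LS.
have : (A `&` B) x by split=> //; exact: LS.
by rewrite (separated_disjoint sepAB).
Qed.

Lemma quot_image_separated (A B : set X) :
  (forall x z, A x -> q z = q x -> A z) ->
  closure A `&` B = set0 -> closure (q @` A) `&` q @` B = set0.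
Proof.
move=> Asat clAB; apply/seteqP; split=> // y [clAy [b Bb qby]]; subst y.
set O := ~` closure A.
have Ob : O b by move=> clAb; have : (closure A `&` B) b by []; rewrite clAB.
have qO : nbhs (q b) (q @` O).
  apply: open_nbhs_nbhs; split; last by exists b.
  exact/q_open/closed_openC/closed_closure.
have [_ [[a Aa <-] [o Oo qoa]]] := clAy _ qO.
exact: Oo (subset_closure (Asat a o Aa qoa)).
Qed.

Lemma quot_preimage_connected (C : set Y) :
  connected C -> connected (q @^-1` C).
Proof.
move=> cC; apply/connectedP => E [E0 CE sepE].
have satF := separated_saturated CE sepE.
have satT : forall x z, E true x -> q z = q x -> E true z.
  apply: (@separated_saturated C _ (E false)); first by rewrite setUC.
  by rewrite separatedC.
apply: (iffLR (connectedP _) cC (fun b => q @` E b)); split.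
- by move=> b; have [x Ex] := E0 b; exists (q x), x.
- have [s qs] := quot_section.
  apply/seteqP; split=> [y Cy|_ [[x Ex <-]|[x Ex <-]]].
  + have : (q @^-1` C) (s y) by rewrite /preimage /= qs.
    by rewrite CE => -[Esy|Esy]; [left|right]; exists (s y).
  + by have : (q @^-1` C) x by rewrite CE; left.
  + by have : (q @^-1` C) x by rewrite CE; right.
- split; first exact: quot_image_separated satF sepE.1.
  rewrite setIC; apply: quot_image_separated satT _.
  by rewrite setIC; exact: sepE.2.
Qed.

Lemma quot_trivial_identity_component : trivial_identity_component Y.
Proof.
move=> y Yy; have [s qs] := quot_section; rewrite -(qs y); apply/quot_kerE.
have preK : q @^-1` @identity_component Y `<=` @identity_component X.
  apply: connected_component_max => //.
    by rewrite /preimage /= (cont_hom1 q_hom); exact: connected_component_refl.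
  exact/quot_preimage_connected/component_connected.
by apply: preK; rewrite /preimage /= qs.
Qed.

End QuotientByIdentityComponent.

Section Compactifications.
Variable G : topGroupType.

Lemma group_compactification_quot (K Ktd : topGroupType) (eta : G -> K)
    (q : K -> Ktd) :
  group_compactification eta -> quotient_by_identity_component q ->
  group_compactification (q \o eta).
Proof.
move=> [[cK _] [heta deta]] Hq.
split; first by split; [exact: quot_compact Hq cK | exact: quot_hausdorff Hq].
split; first exact: cont_hom_comp heta Hq.1.
exact: dense_range_comp deta Hq.1.2 Hq.2.1.
Qed.

Lemma group_compactification_comp_surj (H K : topGroupType) (p : G -> H)
    (f : H -> K) :
  cont_hom p -> (forall y, exists x, p x = y) ->
  group_compactification f -> group_compactification (f \o p).
Proof.
move=> hp psurj [cK [hf df]]; split=> //; split; first exact: cont_hom_comp hp hf.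
by rewrite range_comp_surj.
Qed.

Lemma group_compactification_factor (H K : topGroupType) (p : G -> H)
    (f : H -> K) :
  cont_hom f -> (forall y, exists x, p x = y) ->
  group_compactification (f \o p) -> group_compactification f.
Proof.
move=> hf psurj [cK [_ dfp]]; split=> //; split=> //.
by rewrite -(range_comp_surj f psurj).
Qed.

Lemma td_compactification_universal (Gap Gtd K : topGroupType)
    (eta : G -> Gap) (q : Gap -> Gtd) (f : G -> K) :
  ap_compactification eta -> quotient_by_identity_component q ->
  group_compactification f -> trivial_identity_component K ->
  exists theta : Gtd -> K, cont_hom theta /\ theta \o (q \o eta) = f.
Proof.
move=> [_ univ] Hq compf tdK.
have [g [hg gE]] := univ _ f compf.
have [theta [htheta thetaE]] :=
  quot_factor Hq hg (fun x => cont_hom_trivial_component hg tdK).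
by exists theta; split=> //; rewrite compA thetaE.
Qed.

Lemma compactification_iso (K1 K2 : topGroupType) (e1 : G -> K1) (e2 : G -> K2)
    (a : K1 -> K2) (b : K2 -> K1) :
  group_compactification e1 -> group_compactification e2 ->
  cont_hom a -> cont_hom b -> a \o e1 = e2 -> b \o e2 = e1 ->
  topgroup_iso a.
Proof.
move=> [[_ hK1] [_ d1]] [[_ hK2] [_ d2]] ha hb ae1 be2.
have inverse_on (S T : topGroupType) (e : G -> S) (u : S -> T) (v : T -> S) :
    hausdorff_space S -> dense (range e) -> cont_hom u -> cont_hom v ->
    v \o (u \o e) = e -> cancel u v.
  move=> hS de hu hv vue.
  have vuE : v \o u = id.
    apply: continuous_dense_eq hS de _.
    - exact: (cont_hom_comp hu hv).2.
    - by move=> y; exact: cvg_id.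
    - by move=> y; rewrite inE => -[g _ <-]; exact: (congr1 (fun F => F g) vue).
  by move=> x; exact: (congr1 (fun F => F x) vuE).
split=> //; exists b; split; first exact: hb.2.
split; first by apply: inverse_on hK1 d1 ha hb _; rewrite ae1.
by apply: inverse_on hK2 d2 hb ha _; rewrite be2.
Qed.

End Compactifications.

Theorem proposition2p2
  (G : topGroupType) (HG : locally_compact_group G)
  (Gap Gtd : topGroupType) (etaap : G -> Gap) (qap : Gap -> Gtd)
  (Hap : ap_compactification etaap)
  (Hqap : quotient_by_identity_component qap)
  (Q : topGroupType) (qe : G -> Q) (Hqe : quotient_by_identity_component qe)
  (Qap Qtd : topGroupType) (etaap' : Q -> Qap) (qap' : Qap -> Qtd)
  (Hap' : ap_compactification etaap')
  (Hqap' : quotient_by_identity_component qap') :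
  exists theta : Gtd -> Qtd,
    topgroup_iso theta /\
    theta \o (qap \o etaap) = (qap' \o etaap') \o qe.
Proof.
have tdG := group_compactification_quot Hap.1 Hqap.
have tdQ := group_compactification_quot Hap'.1 Hqap'.
have tdQG := group_compactification_comp_surj Hqe.1 Hqe.2.1 tdQ.
have [theta [htheta thetaE]] := td_compactification_universal Hap Hqap tdQG
  (quot_trivial_identity_component Hqap').
have [h [hh hE]] := quot_factor Hqe tdG.2.1 (fun x =>
  cont_hom_trivial_component tdG.2.1 (quot_trivial_identity_component Hqap)).
have compQ : group_compactification h.
  by apply: group_compactification_factor hh Hqe.2.1 _; rewrite hE.
have [theta' [htheta' theta'E]] := td_compactification_universal Hap' Hqap'
  compQ (quot_trivial_identity_component Hqap).
exists theta; split=> //.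
apply: compactification_iso tdG tdQG htheta htheta' thetaE _.
by rewrite compA theta'E.
Qed.
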